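(* Let $n\ge4$ and let $h=\prod_{x}L_{x,i_{n-1}}$, where $x$ runs over a set of representatives of $Q_{n-2}/\{1,-1\}$ (the factors commute and do not depend on the choice of representatives). Then $h(z)=z$ for all $z\in Q_{n-1}$ and $h(z)=-z$ for all $z\in Q_n\setminus Q_{n-1}$; i.e. $h=\prod(z,-z)$ over representatives $z$ of $(Q_n\setminus Q_{n-1})/\{1,-1\}$.
   Context: Cayley--Dickson loops: $Q_0=\{1,-1\}\subset\mathbb{R}$ with conjugation $x^*=x$. For $n\ge1$, $Q_n=\{(x,0),(x,1)\mid x\in Q_{n-1}\}$ with multiplication $(x,0)(y,0)=(xy,0)$, $(x,0)(y,1)=(yx,1)$, $(x,1)(y,0)=(xy^*,1)$, $(x,1)(y,1)=(-y^*x,0)$ and conjugation $(x,0)^*=(x^*,0)$, $(x,1)^*=(-x,1)$, where $-(x,a)=(-x,a)$. $Q_n$ is a loop with neutral element $1=(1,0,\dots,0)$; $-x=(-1)x$. $Q_{n-1}$ is identified with the subloop $\{(x,0)\}\subset Q_n$, so $Q_{n-2}\subset Q_{n-1}\subset Q_n$. Canonical generators: $i_n=(1_{Q_{n-1}},1)\in Q_n$, and $i_1,\dots,i_{n-1}$ are the canonical generators of $Q_{n-1}\subset Q_n$. $L_x(a)=xa$, $L_{x,y}=L_{yx}^{-1}L_yL_x$. *)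

From HB Require Import structures.
From mathcomp Require Import all_boot.
Set Implicit Arguments. Unset Strict Implicit. Unset Printing Implicit Defensive.

(* Carrier of Q_n: Q_0 = bool (false = 1, true = -1);
   Q_{n+1} = Q_n * bool, the pair (x, a) with a : bool as in the paper. *)
Fixpoint Qt (n : nat) : finType :=
  match n with
  | 0 => (bool : finType)
  | m.+1 => ((Qt m * bool)%type : finType)
  end.

Fixpoint Qone (n : nat) : Qt n :=
  match n return Qt n with
  | 0 => false
  | m.+1 => (Qone m, false)
  end.

Fixpoint Qneg (n : nat) : Qt n -> Qt n :=
  match n return Qt n -> Qt n with
  | 0 => fun x => ~~ x
  | m.+1 => fun x => (Qneg x.1, x.2)
  end.

Fixpoint Qconj (n : nat) : Qt n -> Qt n :=
  match n return Qt n -> Qt n with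
  | 0 => fun x => x
  | m.+1 => fun x => if x.2 then (Qneg x.1, true) else (Qconj x.1, false)
  end.

Fixpoint Qmul (n : nat) : Qt n -> Qt n -> Qt n :=
  match n return Qt n -> Qt n -> Qt n with
  | 0 => fun a b => xorb a b
  | m.+1 => fun u v =>
      let x := u.1 in let y := v.1 in
      match u.2, v.2 with
      | false, false => (Qmul x y, false)
      | false, true  => (Qmul y x, true)
      | true,  false => (Qmul x (Qconj y), true)
      | true,  true  => (Qneg (Qmul (Qconj y) x), false)
      end
  end.

Definition Qemb (n : nat) (x : Qt n) : Qt n.+1 := (x, false).

(* canonical generator i_{n+1} = (1_{Q_n}, 1) of Q_{n+1} *)
Definition Qgen (n : nat) : Qt n.+1 := (Qone n, true).

(* left translation L_a and its inverse L_a^{-1} (left division; since Q_n is a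
   loop, the c with a c = b is unique) *)
Definition QL (n : nat) (a : Qt n) : Qt n -> Qt n := Qmul a.
Definition QLinv (n : nat) (a : Qt n) (b : Qt n) : Qt n :=
  odflt b [pick c : Qt n | Qmul a c == b].

Definition QLxy (n : nat) (x y : Qt n) : Qt n -> Qt n :=
  fun z => QLinv (Qmul y x) (QL y (QL x z)).

Definition is_rep_list (m : nat) (s : seq (Qt m)) : Prop :=
  uniq s /\ forall x : Qt m, (x \in s) = ~~ (Qneg x \in s).

(* the factor L_{x, i_{n-1}} acting on Q_n, n = m+2, for x in Q_{n-2} *)
Definition hfactor (m : nat) (x : Qt m) : Qt m.+2 -> Qt m.+2 :=
  QLxy (Qemb (Qemb x)) (Qemb (Qgen m)).

Definition hprod (m : nat) (s : seq (Qt m)) : Qt m.+2 -> Qt m.+2 :=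
  foldr (fun x f => hfactor x \o f) id s.

From mathcomp Require Import all_boot.
Set Implicit Arguments. Unset Strict Implicit.

(* Every factor L_{x,i_{n-1}} (x in Q_{n-2}, n = m+2) acts on Q_n as a sign
   change z |-> +-z, so any two factors commute and a product of factors sends
   z to (-1)^k z, where k counts the factors that negate z.  Any two elements commute or anticommute, and they
   commute iff one of them is real or they agree up to sign.  Unfolding the
   Cayley--Dickson doubling twice then identifies the sign of L_{x,i}(z) for
   z = ((w,a),b): for z in Q_{n-1} (b = 0) it is - iff x and w anticommute,
   for z outside Q_{n-1} (b = 1) it is - iff x is non-real and commutes with w.
   Finally, over a set of representatives of Q_{n-2}/{+-1} (2^m elements, one of
   them real) these conditions hold for an even number of x when b = 0 and an
   odd number when b = 1, which gives h(z) = z resp. h(z) = -z. *)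

Lemma negK n (x : Qt n) : Qneg (Qneg x) = x.
Proof. by elim: n x => [|n IH] [] //= u a; rewrite IH. Qed.

Lemma neg_inj n : injective (@Qneg n).
Proof. exact: can_inj (@negK n). Qed.

Lemma negI n (x y : Qt n) : (Qneg x == Qneg y) = (x == y).
Proof. by apply/eqP/eqP => [/neg_inj|->]. Qed.

Lemma neq_neg n (x : Qt n) : (x == Qneg x) = false.
Proof. by elim: n x => [|n IH] [] //= u a; rewrite xpair_eqE IH. Qed.

Lemma conjK n (x : Qt n) : Qconj (Qconj x) = x.
Proof. by elim: n x => [|n IH] // [u []] /=; rewrite ?IH ?negK. Qed.

Lemma conjN n (x : Qt n) : Qconj (Qneg x) = Qneg (Qconj x).
Proof. by elim: n x => [|n IH] // [u []] /=; rewrite ?IH. Qed.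

Lemma conj1 n : Qconj (Qone n) = Qone n.
Proof. by elim: n => [|n IH] //=; rewrite IH. Qed.

(* Multiplication commutes with negation on both sides (proved jointly, since
   the doubling formula for (x,1)(y,1) swaps the factors). *)
Lemma mulN n (x y : Qt n) :
  Qmul (Qneg x) y = Qneg (Qmul x y) /\ Qmul x (Qneg y) = Qneg (Qmul x y).
Proof.
elim: n x y => [|n IH] x y; first by case: x; case: y.
by case: x => u [] ; case: y => v [] /=; rewrite ?conjN ?(proj1 (IH _ _)) ?(proj2 (IH _ _)).
Qed.

Lemma mulNl n (x y : Qt n) : Qmul (Qneg x) y = Qneg (Qmul x y).
Proof. exact: (proj1 (mulN _ _)). Qed.

Lemma mulNr n (x y : Qt n) : Qmul x (Qneg y) = Qneg (Qmul x y).
Proof. exact: (proj2 (mulN _ _)). Qed.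

Lemma conjM n (x y : Qt n) : Qconj (Qmul x y) = Qmul (Qconj y) (Qconj x).
Proof.
elim: n x y => [|n IH] x y; first by case: x; case: y.
by case: x => u [] ; case: y => v [] /=; rewrite ?conjN ?IH ?mulNl ?mulNr ?negK ?conjK.
Qed.

Lemma mul1 n (x : Qt n) : Qmul (Qone n) x = x /\ Qmul x (Qone n) = x.
Proof.
elim: n x => [|n IH] x; first by case: x.
by case: x => u [] /=; rewrite ?conj1 ?(proj1 (IH _)) ?(proj2 (IH _)).
Qed.

Lemma mul1l n (x : Qt n) : Qmul (Qone n) x = x.
Proof. exact: (proj1 (mul1 _)). Qed.

Lemma mul1r n (x : Qt n) : Qmul x (Qone n) = x.
Proof. exact: (proj2 (mul1 _)). Qed.

Lemma inverse_property n (a c : Qt n) :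
  Qmul (Qconj a) (Qmul a c) = c /\ Qmul (Qmul c a) (Qconj a) = c.
Proof.
elim: n a c => [|n IH] a c; first by case: a; case: c.
have L1 (x y : Qt n) : Qmul (Qconj x) (Qmul x y) = y by apply: (proj1 (IH _ _)).
have R1 (x y : Qt n) : Qmul (Qmul y x) (Qconj x) = y by apply: (proj2 (IH _ _)).
have L2 (x y : Qt n) : Qmul x (Qmul (Qconj x) y) = y by rewrite -{1}(conjK x) L1.
have R2 (x y : Qt n) : Qmul (Qmul y (Qconj x)) x = y by rewrite -{2}(conjK x) R1.
by case: a => u [] ; case: c => v [] /=;
  rewrite ?conjN ?conjM ?conjK ?mulNl ?mulNr ?negK ?L1 ?R1 ?L2 ?R2.
Qed.

Lemma mul_conj_swap n (u v : Qt n) : Qmul (Qconj u) v = Qconj (Qmul (Qconj v) u).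
Proof. by rewrite conjM conjK. Qed.

Lemma mulKconj n (a c : Qt n) : Qmul (Qconj a) (Qmul a c) = c.
Proof. exact: (proj1 (inverse_property _ _)). Qed.

Lemma mul_conjl n (y : Qt n) : Qmul (Qconj y) y = Qone n.
Proof. by rewrite -{2}(mul1r y) mulKconj. Qed.

Lemma QLinvE n (a b c : Qt n) : Qmul a c = b -> QLinv a b = c.
Proof.
move=> acb; rewrite /QLinv; case: pickP => [c' /eqP ac'b | /(_ c)] /=.
  by rewrite -(mulKconj a c') ac'b -acb mulKconj.
by rewrite acb eqxx.
Qed.

Definition isreal n (x : Qt n) : bool := (x == Qone n) || (x == Qneg (Qone n)).

Lemma isreal_pair n (u : Qt n) (a : bool) : isreal ((u, a) : Qt n.+1) = ~~ a && isreal u.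
Proof. by rewrite /isreal /= !xpair_eqE; case: a; rewrite ?andbF ?andbT. Qed.

Lemma isrealN n (w : Qt n) : isreal (Qneg w) = isreal w.
Proof. by rewrite /isreal -{1}(negK (Qone n)) !negI orbC. Qed.

Lemma conjE n (x : Qt n) : Qconj x = if isreal x then x else Qneg x.
Proof.
elim: n x => [|n IH] x; first by case: x.
by case: x => u [] /=; rewrite isreal_pair //= IH; case: (isreal u).
Qed.

Lemma isreal_div n (u v : Qt n) : isreal (Qmul (Qconj v) u) = (u == v) || (u == Qneg v).
Proof.
apply/idP/idP => [|/orP[] /eqP ->]; rewrite /isreal ?mulNr ?mul_conjl ?eqxx ?orbT //.
rewrite -{3 4}(mulKconj (Qconj v) u) conjK.
by case/orP => /eqP ->; rewrite ?mulNr mul1r eqxx ?orbT.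
Qed.

Definition comm n (x y : Qt n) : bool := Qmul x y == Qmul y x.

Lemma commC n (a b : Qt n) : comm a b = comm b a.
Proof. by rewrite /comm eq_sym. Qed.

Lemma commNl n (a b : Qt n) : comm (Qneg a) b = comm a b.
Proof. by rewrite /comm mulNl mulNr negI. Qed.

Lemma commNr n (a b : Qt n) : comm a (Qneg b) = comm a b.
Proof. by rewrite commC commNl commC. Qed.

Lemma comm_conjl n (a b : Qt n) : comm (Qconj a) b = comm a b.
Proof. by rewrite conjE; case: ifP; rewrite ?commNl. Qed.

Lemma comm_conjr n (a b : Qt n) : comm a (Qconj b) = comm a b.
Proof. by rewrite commC comm_conjl commC. Qed.

Lemma comm_or_anticomm n (x y : Qt n) : Qmul x y = Qmul y x \/ Qmul x y = Qneg (Qmul y x).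
Proof.
elim: n x y => [|n IH] x y; first by left; case: x; case: y.
case: x => u [] ; case: y => v [] /=.
- rewrite (mul_conj_swap u) [Qconj (Qmul _ _)]conjE.
  by case: (isreal _); rewrite ?negK; [left|right].
- by rewrite (conjE v); case: (isreal v); rewrite ?mulNr; [left|right].
- by rewrite (conjE u); case: (isreal u); rewrite ?mulNr ?negK; [left|right].
- by case: (IH u v) => ->; [left|right].
Qed.

Lemma mulC_sign n (x y : Qt n) : Qmul x y = if comm x y then Qmul y x else Qneg (Qmul y x).
Proof.
rewrite /comm; case: (comm_or_anticomm x y) => ->; first by rewrite eqxx.
by rewrite eq_sym neq_neg.
Qed.

Lemma commE n (x y : Qt n) : comm x y = [|| isreal x, isreal y, x == y | x == Qneg y].
Proof.
rewrite /comm; elim: n x y => [|n IH] x y; first by case: x; case: y.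
case: x => u [] ; case: y => v []; rewrite /= !isreal_pair /= ?xpair_eqE /= ?andbT ?andbF //.
- rewrite negI (mul_conj_swap u) [Qconj (Qmul _ _)]conjE isreal_div.
  by case: ifP => _; rewrite ?eqxx // neq_neg.
- by rewrite !orbF (conjE v); case: (isreal v); rewrite ?eqxx // mulNr eq_sym neq_neg.
- by rewrite !orbF (conjE u); case: (isreal u); rewrite ?eqxx // mulNr neq_neg.
Qed.

Lemma comm_real n (a b : Qt n) : isreal a -> comm a b.
Proof. by rewrite commE => ->. Qed.

(* hflip x z holds when the factor L_{x,i_{n-1}} negates z = ((w,a),b). *)
Definition hflip m (x : Qt m) (z : Qt m.+2) : bool :=
  if z.2 then ~~ isreal x && comm x z.1.1 else ~~ comm x z.1.1.

Lemma hflipN m (x : Qt m) (z : Qt m.+2) : hflip x (Qneg z) = hflip x z.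
Proof. by case: z => [[w a] b]; rewrite /hflip /= commNr. Qed.

(* Each factor is a sign change: L_{x,i}(z) = +-z.  Equivalently
   (i x) z = +- i (x z), which is checked by unfolding the doubling twice. *)
Lemma hfactorE m (x : Qt m) (z : Qt m.+2) : hfactor x z = if hflip x z then Qneg z else z.
Proof.
rewrite /hfactor /QLxy /QL; apply: QLinvE; rewrite (fun_if (Qmul _)) mulNr.
suff -> : Qmul (Qmul (Qemb (Qgen m)) (Qemb (Qemb x))) z =
   (if hflip x z then Qneg (Qmul (Qemb (Qgen m)) (Qmul (Qemb (Qemb x)) z))
    else Qmul (Qemb (Qgen m)) (Qmul (Qemb (Qemb x)) z)).
  by case: (hflip x z); rewrite ?negK.
case: z => [[w a] b]; rewrite /hflip /=.
case: a; case: b => /=; rewrite ?conj1 ?mul1l ?mul1r ?conjK.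
- rewrite (conjE x); case: (boolP (isreal x)) => [xr|_] /=.
    by rewrite (mulC_sign x w) comm_real.
  by rewrite mulNr negK (mulC_sign x w); case: (comm x w); rewrite ?negK.
- rewrite conjM (mulC_sign (Qconj w)) comm_conjl comm_conjr commC.
  by case: (comm x w); rewrite ?negK.
- rewrite (conjE x); case: (boolP (isreal x)) => [xr|_] /=.
    by rewrite (mulC_sign x w) comm_real.
  by rewrite mulNl (mulC_sign x w); case: (comm x w); rewrite ?negK.
- by rewrite conjM (mulC_sign (Qconj x)) comm_conjl comm_conjr; case: (comm x w).
Qed.

(* Sign changes whose sign is invariant under z |-> -z commute. *)
Lemma hfactor_comm m (x y : Qt m) : hfactor x \o hfactor y =1 hfactor y \o hfactor x.
Proof.
move=> z /=; rewrite !hfactorE.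
by case Hy: (hflip y z); case Hx: (hflip x z); rewrite ?hflipN ?Hx ?Hy ?negK.
Qed.

Lemma hprodE m (s : seq (Qt m)) (z : Qt m.+2) :
  hprod s z = if odd (count (fun x => hflip x z) s) then Qneg z else z.
Proof.
elim: s => [|x s IH] //=; rewrite hfactorE IH oddD.
by case: (odd _); rewrite ?hflipN; case: (hflip x z); rewrite ?negK.
Qed.

Lemma card_Qt m : #|Qt m| = 2 ^ m.+1.
Proof. by elim: m => [|m IH]; rewrite ?card_bool // expnS -IH card_prod card_bool mulnC. Qed.

Lemma size_rep m (s : seq (Qt m)) : is_rep_list s -> size s = 2 ^ m.
Proof.
case=> us hs; apply/eqP; rewrite -(eqn_pmul2l (isT : 0 < 2)) mul2n -addnn -expnS.
rewrite -card_Qt -(cardC (mem s)) (card_uniqP us); apply/eqP; congr (_ + _).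
have -> : #|[predC s]| = #|map (@Qneg m) s|.
  by apply: eq_card => x; rewrite !inE -{2}(negK x) (mem_map (@neg_inj m)) hs negbK.
by rewrite (card_uniqP _) ?size_map // (map_inj_uniq (@neg_inj m)).
Qed.

Lemma count_pm m (s : seq (Qt m)) (a : Qt m) : is_rep_list s ->
  count (fun x => (x == a) || (x == Qneg a)) s = 1.
Proof.
case=> us hs; have := count_predUI (pred1 a) (pred1 (Qneg a)) s.
rewrite (@eq_count _ (predI _ _) pred0) ?count_pred0 ?addn0; last first.
  by move=> x /=; apply/negP => /andP[/eqP -> ]; rewrite neq_neg.
by rewrite !count_uniq_mem // => ->; rewrite hs; case: (Qneg a \in s).
Qed.

Lemma count_real m (s : seq (Qt m)) : is_rep_list s -> count (@isreal m) s = 1.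
Proof. exact: count_pm. Qed.

Lemma count_comm m (s : seq (Qt m)) (w : Qt m) : is_rep_list s ->
  count (fun x => comm x w) s = if isreal w then 2 ^ m else 2.
Proof.
move=> hs; case: ifP => Hw.
  by rewrite -(size_rep hs) -count_predT; apply: eq_count => x; rewrite /= commE Hw orbT.
rewrite (eq_count (a2 := predU (@isreal m) (fun x => (x == w) || (x == Qneg w)))); last first.
  by move=> x; rewrite /= commE Hw.
have := count_predUI (@isreal m) (fun x => (x == w) || (x == Qneg w)) s.
rewrite (@eq_count _ (predI _ _) pred0) ?count_pred0 ?addn0 ?count_real ?count_pm //.
by move=> x /=; apply/negP => /andP[Hx /orP[] /eqP E]; move: Hx; rewrite E ?isrealN Hw.
Qed.

Lemma count_comm_nonreal m (s : seq (Qt m)) (w : Qt m) : is_rep_list s ->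
  count (fun x => ~~ isreal x && comm x w) s = count (fun x => comm x w) s - 1.
Proof.
move=> hs; have reals : count (predI (@isreal m) (fun x => comm x w)) s = 1.
  rewrite -(count_real hs); apply: eq_count => x /=.
  by case: (boolP (isreal x)) => // /comm_real ->.
have := count_predC (@isreal m) [seq x <- s | comm x w].
by rewrite size_filter !count_filter reals => <-; rewrite addKn.
Qed.

Lemma count_hflip_odd m (s : seq (Qt m)) (z : Qt m.+2) : 0 < m -> is_rep_list s ->
  odd (count (fun x => hflip x z) s) = z.2.
Proof.
move=> m_gt0 hs; have odd2m : odd (2 ^ m) = false by rewrite oddX eqn0Ngt m_gt0.
have le2m : 2 <= 2 ^ m by rewrite -{1}(expn1 2) leq_exp2l.
case: z => [[w a] []]; rewrite /hflip /=.
  by rewrite count_comm_nonreal // count_comm //; case: ifP; rewrite oddB ?odd2m ?expn_gt0.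
have -> : count (fun x => ~~ comm x w) s = 2 ^ m - count (fun x => comm x w) s.
  by rewrite -(size_rep hs) -(count_predC (fun x => comm x w) s) addKn.
by rewrite count_comm //; case: ifP; rewrite ?subnn // oddB ?odd2m.
Qed.

Theorem mainTheorem15 (m : nat) (hm : 2 <= m) :
  (forall x y : Qt m, hfactor x \o hfactor y =1 hfactor y \o hfactor x) /\
  (forall s : seq (Qt m), is_rep_list s ->
     forall z : Qt m.+2,
       hprod s z = (if z.2 then Qneg z else z)).
Proof.
split; first exact: hfactor_comm.
move=> s hs z; rewrite hprodE count_hflip_odd //.
exact: leq_trans hm.
Qed.
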